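(* Let $n\ge 2$ and $q\ge 2$ be integers, let $E_q=\{0,1,\dots,q-1\}$, and let $A\subseteq E_q^n$ be a subset with $m=|A|\ge 2$. Let $R(A)$ denote the number of coordinates $i\in\{1,\dots,n\}$ such that the $i$-th coordinates of the elements of $A$ are not all equal, and let $D_A=\sum_{\{x,y\}\subseteq A,\ x\neq y} d_H(x,y)$, the sum of the Hamming distances over all unordered pairs of distinct elements of $A$. Then: (1) if $m/q\ge 1$, then \[\frac{2qD_A}{(q-1)m^2}\le R(A)\le \frac{D_A}{m-1};\] (2) if $m/q<1$ and $q>2$, then \[\frac{2(q-2)D_A}{(m^2-2)(q-2)-(m-2)^2}\le R(A)\le \frac{D_A}{m-1}.\]
   Context: $E_q^n$ is the set of all $n$-tuples $(x_1,\dots,x_n)$ with $x_i\in E_q$, equipped with the Hamming distance $d_H(x,y)=|\{i : x_i\neq y_i\}|$. Equivalently, $R(A)$ is the number of non-constant columns of the matrix whose rows are the elements of $A$ (the dimension of the smallest face of $E_q^n$ containing $A$, where a $k$-dimensional face is a set of vectors with $k$ coordinates varying freely and the other $n-k$ fixed). *)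

From mathcomp Require Import all_boot all_order all_algebra.
Set Implicit Arguments. Unset Strict Implicit. Unset Printing Implicit Defensive.
Import Order.TTheory GRing.Theory Num.Theory.

Definition word (n q : nat) := {ffun 'I_n -> 'I_q}.

Definition dH (n q : nat) (x y : word n q) : nat := #|[set i : 'I_n | x i != y i]|.

Definition Rk (n q : nat) (A : {set word n q}) : nat :=
  #|[set i : 'I_n | [exists x in A, exists y in A, x i != y i]]|.

(* D_A: sum of Hamming distances over unordered pairs {x,y} of distinct
   elements of A, i.e. half the sum over ordered pairs (d(x,x)=0). *)
Definition DA (n q : nat) (A : {set word n q}) : rat :=
  ((\sum_(x in A) \sum_(y in A) dH x y)%N%:R / 2)%R.

From mathcomp Require Import all_boot all_order all_algebra.
From mathcomp Require Import zify ring lra.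
Import Order.TTheory GRing.Theory Num.Theory.
Set Implicit Arguments. Unset Strict Implicit.

(* Coordinate i contributes to 2 D_A the number s_i of ordered pairs of A
   that differ at i, and s_i = 0 off the R(A) varying coordinates.  If the
   fibres of x |-> x_i have sizes c_a, then s_i = m^2 - sum_a c_a^2.  On a
   varying coordinate some fibre has size k with 0 < k < m, so
   s_i >= 2k(m-k) >= 2(m-1); since c_a <= c_a^2, s_i <= m(m-1); and
   Cauchy-Schwarz over the q symbols gives q s_i <= (q-1) m^2.  Summing over
   the varying coordinates gives the upper bound and the lower bound of (1);
   the lower bound of (2) follows from s_i <= m(m-1), as the denominator
   equals m(m-1)(q-2) + (m-2)(q-m). *)

Lemma sqr_sum_le_card_sum_sqr (I : finType) (c : I -> nat) :
  (\sum_i c i) ^ 2 <= #|I| * \sum_i c i ^ 2.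
Proof.
rewrite -(leq_pmul2l (isT : 0 < 2)).
have -> : 2 * (\sum_i c i) ^ 2 = \sum_i \sum_j 2 * (c i * c j).
  rewrite mulnC expnS expn1 big_distrl /= big_distrl /=.
  apply: eq_bigr => i _; rewrite big_distrr big_distrl /=.
  by apply: eq_bigr => j _; rewrite mulnC.
have -> : 2 * (#|I| * \sum_i c i ^ 2) = \sum_i \sum_j (c i ^ 2 + c j ^ 2).
  under [RHS]eq_bigr => i _ do rewrite big_split /= sum_nat_const.
  by rewrite big_split /= sum_nat_const -big_distrr /= addnn -mul2n.
apply: leq_sum => i _; apply: leq_sum => j _; exact: (nat_Cauchy _ _).1.
Qed.

Section Fibres.
Variables (aT T : finType) (A : {set aT}) (f : aT -> T).

Definition npairs_neq := \sum_(x in A) \sum_(y in A) (f x != f y).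

Let fibre a := \sum_(x in A) (f x == a).

Lemma sum_fibre : \sum_a fibre a = #|A|.
Proof.
rewrite exchange_big /= -sum1_card; apply: eq_bigr => x _.
by rewrite (bigD1 (f x)) //= eqxx big1 // => a; rewrite eq_sym => /negbTE ->.
Qed.

Lemma npairs_neq_add_sum_sqr_fibre : npairs_neq + \sum_a fibre a ^ 2 = #|A| ^ 2.
Proof.
have -> : \sum_a fibre a ^ 2 = \sum_(x in A) \sum_(y in A) (f x == f y).
  under eq_bigr => a _ do rewrite expnS expn1 big_distrl /=.
  rewrite exchange_big /=; apply: eq_bigr => x _.
  rewrite (bigD1 (f x)) //= eqxx mul1n big1 ?addn0.
    by under eq_bigr do rewrite eq_sym.
  by move=> a /negbTE; rewrite eq_sym => ->; rewrite mul0n.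
rewrite -big_split /= expnS expn1 -sum_nat_const; apply: eq_bigr => x _.
by rewrite -big_split /= -sum1_card; apply: eq_bigr => y _; case: eqP.
Qed.

Lemma npairs_neq_le : npairs_neq <= #|A| * (#|A| - 1).
Proof.
have := npairs_neq_add_sum_sqr_fibre; rewrite -sum_fibre.
have : \sum_a fibre a <= \sum_a fibre a ^ 2 by apply: leq_sum => a _; nia.
nia.
Qed.

Lemma card_mul_npairs_neq_le : #|T| * npairs_neq <= (#|T| - 1) * #|A| ^ 2.
Proof.
have := npairs_neq_add_sum_sqr_fibre.
have := sqr_sum_le_card_sum_sqr fibre; rewrite sum_fibre.
nia.
Qed.

Lemma npairs_neq_ge x0 y0 :
  x0 \in A -> y0 \in A -> f x0 != f y0 -> 2 * (#|A| - 1) <= npairs_neq.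
Proof.
move=> Ax0 Ay0 neq_xy; set a := f x0.
set b := fibre a; set c := \sum_(y in A) (f y != a).
have card_A : b + c = #|A|.
  by rewrite -big_split -sum1_card; apply: eq_bigr => y _; case: (f y == a).
have b_gt0 : 0 < b by rewrite /b /fibre (bigD1 x0) //= eqxx.
have c_gt0 : 0 < c by rewrite /c (bigD1 y0) //= eq_sym neq_xy.
suff : b * c + c * b <= npairs_neq by nia.
have -> : b * c + c * b = \sum_(x in A) ((f x == a) * c + (f x != a) * b).
  by rewrite big_split -!big_distrl.
apply: leq_sum => x _; case: (eqVneq (f x) a) => [-> | neq_xa] /=.
  by rewrite mul1n mul0n addn0; apply: leq_sum => y _; rewrite eq_sym.
rewrite mul0n mul1n; apply: leq_sum => y _.
by case: (eqVneq (f y) a) => [-> | //]; rewrite neq_xa.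
Qed.

End Fibres.

Lemma sum_supported_bounds (I : finType) (B : {set I}) (F : I -> nat) lo hi :
  (forall i, i \notin B -> F i = 0) -> {in B, forall i, lo <= F i <= hi} ->
  #|B| * lo <= \sum_i F i <= #|B| * hi.
Proof.
move=> F_off F_on; rewrite (bigID [in B]) /= addnC big1 ?add0n //.
by rewrite -!sum_nat_const !leq_sum // => i /F_on /andP [].
Qed.

Section Words.
Variables (n q : nat) (A : {set word n q}).

Let pair_dist_sum := \sum_(x in A) \sum_(y in A) dH x y.
Let varying := [set i : 'I_n | [exists x in A, exists y in A, x i != y i]].
Let disagree i := npairs_neq A (fun x : word n q => x i).

Lemma pair_dist_sum_disagree : pair_dist_sum = \sum_i disagree i.
Proof.
rewrite /pair_dist_sum /disagree /npairs_neq [RHS]exchange_big /=; apply: eq_bigr => x _.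
rewrite [RHS]exchange_big /=; apply: eq_bigr => y _.
rewrite /dH -sum1_card big_mkcond /=; apply: eq_bigr => i _.
by rewrite inE; case: (x i != y i).
Qed.

Lemma disagree_eq0 i : i \notin varying -> disagree i = 0.
Proof.
rewrite inE => const_i; rewrite /disagree /npairs_neq big1 // => x Ax.
rewrite big1 // => y Ay.
apply/eqP; rewrite eqb0 negbK; apply: contraNT const_i => neq_xy.
by apply/existsP; exists x; rewrite Ax; apply/existsP; exists y; rewrite Ay.
Qed.

Lemma disagree_bounds i :
  i \in varying -> 2 * (#|A| - 1) <= disagree i <= #|A| * (#|A| - 1).
Proof.
rewrite inE; case/existsP=> x /andP [Ax /existsP [y /andP [Ay neq_xy]]].
by rewrite (npairs_neq_ge Ax Ay neq_xy) npairs_neq_le.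
Qed.

Lemma pair_dist_sum_bounds :
  Rk A * (2 * (#|A| - 1)) <= pair_dist_sum <= Rk A * (#|A| * (#|A| - 1)).
Proof.
rewrite pair_dist_sum_disagree.
exact: sum_supported_bounds disagree_eq0 disagree_bounds.
Qed.

Lemma card_mul_pair_dist_sum_le : q * pair_dist_sum <= Rk A * ((q - 1) * #|A| ^ 2).
Proof.
rewrite pair_dist_sum_disagree big_distrr /=.
suff /andP [_ //] :
  #|varying| * 0 <= \sum_i q * disagree i <= #|varying| * ((q - 1) * #|A| ^ 2).
apply: sum_supported_bounds => i.
- by move/disagree_eq0 => disagree_i0 /=; rewrite disagree_i0 muln0.
- move=> _ /=.
  by have := card_mul_npairs_neq_le A (fun x : word n q => x i); rewrite card_ord.
Qed.
End Words.

Local Open Scope ring_scope.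

Theorem mainTheorem1 (n q : nat) (A : {set word n q}) :
  (2 <= n)%N -> (2 <= q)%N -> (2 <= #|A|)%N ->
  let m : rat := (#|A|)%:R in
  let qq : rat := q%:R in
  let R : rat := (Rk A)%:R in
  ((qq <= m) ->
     2 * qq * DA A / ((qq - 1) * m ^+ 2) <= R /\ R <= DA A / (m - 1)) /\
  ((m < qq) -> (2 < q)%N ->
     2 * (qq - 2) * DA A / ((m ^+ 2 - 2) * (qq - 2) - (m - 2) ^+ 2) <= R
     /\ R <= DA A / (m - 1)).
Proof.
move=> _ q_ge2 A_ge2 m qq R.
have A_ge1 : (1 <= #|A|)%N by apply: ltnW.
have q_ge1 : (1 <= q)%N by apply: ltnW.
have /andP [S_ge S_le] := pair_dist_sum_bounds A.
have S_le_q := card_mul_pair_dist_sum_le A.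
rewrite /DA; set S := (\sum_(x in A) _)%N in S_ge S_le S_le_q *.
rewrite -!(ler_nat rat) !natrM !natrB // -/m -/qq -/R in S_ge S_le S_le_q.
have m_ge2 : 2 <= m by rewrite (ler_nat rat 2).
have qq_ge2 : 2 <= qq by rewrite (ler_nat rat 2).
have R_ge0 : 0 <= R by rewrite ler0n.
have upper : R <= S%:R / 2 / (m - 1) by rewrite ler_pdivlMr; lra.
(* [2 < q] is implied by [2 <= m < q]. *)
split=> [qq_le_m | m_lt_qq _]; split => //.
  rewrite ler_pdivrMr; last by apply: mulr_gt0; [lra | nra].
  nra.
have -> : (m ^+ 2 - 2) * (qq - 2) - (m - 2) ^+ 2
          = m * (m - 1) * (qq - 2) + (m - 2) * (qq - m) by ring.
have m_qq_ge0 : 0 <= (m - 2) * (qq - m) by apply: mulr_ge0; lra.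
rewrite ler_pdivrMr; last by apply: ltr_wpDr => //; rewrite !mulr_gt0 //; lra.
nra.
Qed.
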